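(* Let $\Phi_1,\dots,\Phi_N:\mathcal L(\mathbb C^d)\to\mathcal L(\mathbb C^d)$ be quantum channels and $\mathbf e^{(1)},\dots,\mathbf e^{(N)}$ orthonormal bases of $\mathbb C^d$ such that for all $i\ne j$ in $[N]$, $\langle G_{\Phi_i,\mathbf e^{(i)}}-\omega,\ G_{\Phi_j,\mathbf e^{(j)}}-\omega\rangle=0$ (Hilbert–Schmidt inner product). Then $$\min\Big\{\operatorname{Tr}H:\ H \text{ Hermitian},\ H\ge G_{\Phi_i,\mathbf e^{(i)}}\ \forall i\in[N]\Big\}=1-N+\sum_{i=1}^N\operatorname{Tr}G_{\Phi_i,\mathbf e^{(i)}}.$$
   Context: For $X=\sum_{i,j}X_{ij}|i\rangle\langle j|$, $|X\rangle:=\sum_{i,j}X_{ij}|i\rangle\otimes|j\rangle$. For a channel $\Phi$ with Hilbert–Schmidt adjoint $\Phi^*$ and an orthonormal basis $\mathbf e=(e_i)$, $G_{\Phi,\mathbf e}:=\sum_{i=1}^d |\Phi^*(|e_i\rangle\langle e_i|)\rangle\langle\Phi^*(|e_i\rangle\langle e_i|)|/\operatorname{Tr}\Phi^*(|e_i\rangle\langle e_i|)$ (terms with zero denominator omitted). $\omega:=\frac1d\sum_{i,j=1}^d|ii\rangle\langle jj|$ is the maximally entangled state. *)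

(* Complex numbers are modelled as R[i] (complex R) for an
   arbitrary real closed field R; taking R to be the reals gives C. *)
From HB Require Import structures.
From mathcomp Require Import all_boot all_order all_algebra.
From mathcomp Require Import complex mxtens.
Set Implicit Arguments.
Unset Strict Implicit.
Unset Printing Implicit Defensive.
Import Order.TTheory GRing.Theory Num.Theory Num.Def.
Local Open Scope ring_scope.

Section QDefs.
Variable R : rcfType.
Local Notation C := (R[i]).

Definition hadj m n (A : 'M[C]_(m, n)) : 'M[C]_(n, m) := map_mx conjC A^T.

Definition is_hermitian n (H : 'M[C]_n) : Prop := hadj H = H.

Definition psd n (A : 'M[C]_n) : Prop :=
  forall v : 'cV[C]_n, 0 <= (hadj v *m A *m v) 0 0.

Definition loewner_ge n (A B : 'M[C]_n) : Prop := psd (A - B).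

Definition hs_inner m (A B : 'M[C]_m) : C := \tr (hadj A *m B).

Variable d : nat.

Definition choi (Phi : 'M[C]_d -> 'M[C]_d) : 'M[C]_(d * d) :=
  \sum_(i < d) \sum_(j < d) (delta_mx i j *t Phi (delta_mx i j)).

Definition quantum_channel (Phi : 'M[C]_d -> 'M[C]_d) : Prop :=
  [/\ (forall (a : C) (X Y : 'M[C]_d), Phi (a *: X + Y) = a *: Phi X + Phi Y),
      psd (choi Phi)
    & forall X : 'M[C]_d, \tr (Phi X) = \tr X].

(* Hilbert-Schmidt adjoint: the linear map Phi^* with
   <Phi^*(A), B> = <A, Phi(B)>; entrywise (Phi^* A)_{kl} = <Phi(E_kl), A>. *)
Definition hs_adjoint (Phi : 'M[C]_d -> 'M[C]_d) (A : 'M[C]_d) : 'M[C]_d :=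
  \matrix_(k, l) hs_inner (Phi (delta_mx k l)) A.

Definition orthonormal_basis (e : 'I_d -> 'cV[C]_d) : Prop :=
  forall i j, (hadj (e i) *m e j) 0 0 = (i == j)%:R.

Definition ketb (i : 'I_d) : 'cV[C]_d := delta_mx i 0.

Definition vket (X : 'M[C]_d) : 'cV[C]_(d * d) :=
  \sum_(i < d) \sum_(j < d) X i j *: (ketb i *t ketb j).

Definition vproj (X : 'M[C]_d) : 'M[C]_(d * d) := vket X *m hadj (vket X).

Definition Gmat (Phi : 'M[C]_d -> 'M[C]_d) (e : 'I_d -> 'cV[C]_d)
  : 'M[C]_(d * d) :=
  \sum_(i < d | \tr (hs_adjoint Phi (e i *m hadj (e i))) != 0)
     (\tr (hs_adjoint Phi (e i *m hadj (e i))))^-1 *: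
       vproj (hs_adjoint Phi (e i *m hadj (e i))).

Definition omega : 'M[C]_(d * d) :=
  (d%:R)^-1 *: \sum_(i < d) \sum_(j < d)
     ((ketb i *t ketb i) *m hadj (ketb j *t ketb j)).

End QDefs.

(* Let D_k = G_k - omega.  Writing X_i = Phi^*(|e_i><e_i|) and t_i = Tr X_i, the
   X_i are positive semidefinite (complete positivity) and sum to the identity
   (trace preservation), so D_k = sum_i t_i |u_i><u_i| with
   u_i = |X_i>/t_i - |1>/d is positive semidefinite.  For positive semidefinite
   matrices Tr (D_k D_l) = 0 forces D_k D_l = 0, so H = omega + sum_k D_k is
   feasible and has the claimed trace.  Conversely the D_k commute, hence are
   diagonal in a common orthonormal basis, in which at most one of them is
   nonzero at each diagonal position; comparing the diagonal of H with that of
   omega + D_k there gives Tr H >= Tr omega + sum_k Tr D_k. *)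
From HB Require Import structures.
From mathcomp Require Import all_boot all_order all_algebra.
From mathcomp Require Import complex mxtens sesquilinear spectral.
From mathcomp Require Import ring.
Set Implicit Arguments.
Unset Strict Implicit.
Unset Printing Implicit Defensive.
Import Order.TTheory GRing.Theory Num.Theory Num.Def.
Local Open Scope ring_scope.

Section ConjugateTranspose.
Variable R : rcfType.
Local Notation C := R[i].

Lemma hadjE m n (A : 'M[C]_(m, n)) i j : hadj A i j = (A j i)^*.
Proof. by rewrite !mxE. Qed.

Lemma hadjB m n : {morph @hadj R m n : A B / A - B}.
Proof. by move=> A B; apply/matrixP => i j; rewrite !hadjE !mxE rmorphB. Qed.

HB.instance Definition _ m n :=
  GRing.isZmodMorphism.Build _ _ (@hadj R m n) (@hadjB m n).

Lemma hadjZ m n a (A : 'M[C]_(m, n)) : hadj (a *: A) = a^* *: hadj A.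
Proof. by apply/matrixP => i j; rewrite !(hadjE, mxE) rmorphM. Qed.

Lemma hadjK m n (A : 'M[C]_(m, n)) : hadj (hadj A) = A.
Proof. by apply/matrixP => i j; rewrite !hadjE conjCK. Qed.

Lemma hadj1 n : hadj (1%:M : 'M[C]_n) = 1%:M.
Proof. by apply/matrixP => i j; rewrite hadjE !mxE rmorph_nat eq_sym. Qed.

Lemma hadj_mul m n p (A : 'M[C]_(m, n)) (B : 'M[C]_(n, p)) :
  hadj (A *m B) = hadj B *m hadj A.
Proof. by rewrite /hadj trmx_mul map_mxM. Qed.

Lemma hadj_delta m n (i : 'I_m) (j : 'I_n) :
  hadj (delta_mx i j : 'M[C]_(m, n)) = delta_mx j i.
Proof. by apply/matrixP => a b; rewrite hadjE !mxE rmorph_nat andbC. Qed.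

Lemma hadj_tens m n p q (A : 'M[C]_(m, n)) (B : 'M[C]_(p, q)) :
  hadj (A *t B) = hadj A *t hadj B.
Proof. by rewrite /hadj trmx_tens map_mxT. Qed.

Lemma mxtrace_hadj n (A : 'M[C]_n) : \tr (hadj A) = (\tr A)^*.
Proof. by rewrite rmorph_sum; apply: eq_bigr => i _; rewrite hadjE. Qed.

Lemma hadj_unitary_mulmx n (P : 'M[C]_n) : P \is unitarymx -> hadj P *m P = 1%:M.
Proof. by move=> /unitarymxP Pu; apply: mulmx1C. Qed.

Lemma mxtrace_unitary_conj n (P A : 'M[C]_n) : P \is unitarymx ->
  \tr (P *m A *m hadj P) = \tr A.
Proof. by move=> Pu; rewrite mxtrace_mulC mulmxA hadj_unitary_mulmx ?mul1mx. Qed.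

End ConjugateTranspose.

Section PositiveSemidefinite.
Variable R : rcfType.
Local Notation C := R[i].

Definition qform n (A : 'M[C]_n) (u v : 'cV[C]_n) : C := (hadj u *m A *m v) 0 0.

Lemma qform_lincomb n (A : 'M[C]_n) (a c : C) (u v : 'cV[C]_n) :
  qform A (a *: u + c *: v) (a *: u + c *: v) =
  a^* * a * qform A u u + a^* * c * qform A u v + c^* * a * qform A v u
  + c^* * c * qform A v v.
Proof.
have qformDl x y z : qform A (x + y) z = qform A x z + qform A y z.
  by rewrite /qform raddfD !mulmxDl mxE.
have qformDr x y z : qform A x (y + z) = qform A x y + qform A x z.
  by rewrite /qform mulmxDr mxE.
have qformZl s x y : qform A (s *: x) y = s^* * qform A x y.
  by rewrite /qform hadjZ -!scalemxAl mxE.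
have qformZr s x y : qform A x (s *: y) = s * qform A x y.
  by rewrite /qform -!scalemxAr mxE.
by rewrite !qformDl !qformDr !qformZl !qformZr; ring.
Qed.

Lemma qform_delta n (A : 'M[C]_n) k l :
  qform A (delta_mx k 0) (delta_mx l 0) = A k l.
Proof. by rewrite /qform hadj_delta -rowE -colE !mxE. Qed.

Lemma qform_row m n (X : 'M[C]_(m, n)) (A : 'M[C]_n) j :
  (X *m A *m hadj X) j j = qform A (hadj (row j X)) (hadj (row j X)).
Proof.
by rewrite -[LHS]qform_delta /qform rowE !hadj_mul !hadjK !hadj_delta !mulmxA.
Qed.

(* Polarization: [c * (A k l - (A l k)^* )] is real for every [c], so taking
   [c = 'i] forces it to vanish. *)
Lemma psd_hermitian n (A : 'M[C]_n) : psd A -> hadj A = A.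
Proof.
move=> Apsd; apply/matrixP => l k; rewrite hadjE.
have real_diag j : (A j j)^* = A j j.
  by apply: geC0_conj; rewrite -qform_delta; apply: Apsd.
set z := A k l - (A l k)^*.
have real_mul c : (c * z)^* = c * z.
  have := geC0_conj (Apsd (1 *: delta_mx k 0 + c *: delta_mx l 0)).
  rewrite -/(qform _ _ _) qform_lincomb !qform_delta rmorph1 !mul1r !mulr1.
  rewrite /z !(rmorphM, rmorphB, rmorphD) /= !conjCK !real_diag.
  move/eqP; rewrite -subr_eq0 => /eqP E.
  by apply/eqP; rewrite -subr_eq0 -E; apply/eqP; ring.
have real_z : z^* = z by rewrite -[z]mul1r real_mul.
have := real_mul 'i; rewrite rmorphM /= conjCi real_z mulNr => /eqP.
rewrite eq_sym -addr_eq0 -mulr2n mulrn_eq0 /= mulf_eq0 (negPf (neq0Ci _)) /=.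
by rewrite subr_eq0 => /eqP ->; rewrite conjCK.
Qed.

Lemma hadj_mulmx_dotmx m (y : 'cV[C]_m) : (hadj y *m y) 0 0 = dotmx (hadj y) (hadj y).
Proof. by rewrite dotmxE (hadjK y : map_mx conjC (hadj y)^T = y). Qed.

Lemma psd_qform_eq0 n (A : 'M[C]_n) v : psd A -> qform A v v = 0 -> A *m v = 0.
Proof.
move=> Apsd Av0; set y := A *m v.
set a := dotmx (hadj y) (hadj y); set b := qform A y y.
have a_ge0 : 0 <= a := dnorm_ge0 _ _.
have b_ge0 : 0 <= b := Apsd y.
have Avy : qform A v y = a.
  by rewrite /qform /a -hadj_mulmx_dotmx /y hadj_mul psd_hermitian // mulmxA.
have Ayv : qform A y v = a by rewrite /qform /a -hadj_mulmx_dotmx mulmxA.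
(* With [a = |A v|^2], the form at [(b + 1) v - a A v] equals [- a^2 (b + 2)]. *)
have := Apsd ((b + 1) *: v + (- a) *: y).
rewrite -/(qform _ _ _) qform_lincomb Avy Ayv Av0 -/b.
rewrite !(rmorphD, rmorphN) rmorph1 /= !geC0_conj //.
have -> : (b + 1) * (b + 1) * 0 + (b + 1) * - a * a + - a * (b + 1) * a
          + - a * - a * b = - (a * a * (b + 2)) by ring.
rewrite oppr_ge0 => aab_le0.
have b2_gt0 : 0 < b + 2 by apply: ltr_wpDl.
have /eqP : a * a * (b + 2) = 0.
  by apply/eqP; rewrite eq_le aab_le0 !mulr_ge0 ?(ltW b2_gt0).
rewrite !mulf_eq0 orbb (gt_eqF b2_gt0) orbF dnorm_eq0 => /eqP y0.
by rewrite -[y]hadjK y0 raddf0.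
Qed.

Lemma psd_sum n (I : finType) (P : pred I) (F : I -> 'M[C]_n) :
  (forall i, P i -> psd (F i)) -> psd (\sum_(i | P i) F i).
Proof.
move=> Fpsd; apply: (big_ind (@psd _ n)) => // [v|A B Apsd Bpsd v].
  by rewrite mulmx0 mul0mx mxE.
by rewrite mulmxDr mulmxDl mxE addr_ge0.
Qed.

Lemma psd_outer n (t : C) (y : 'cV[C]_n) : 0 <= t -> psd (t *: (y *m hadj y)).
Proof.
move=> t_ge0 v; rewrite -scalemxAr -scalemxAl mxE; apply: mulr_ge0 => //.
rewrite !mulmxA -(mulmxA (hadj v *m y)) mxE big_ord1.
have -> : (hadj v *m y) 0 0 = ((hadj y *m v) 0 0)^*.
  by rewrite -[in LHS](hadjK y) -hadj_mul hadjE.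
by rewrite mulrC; apply: mul_conjC_ge0.
Qed.

Lemma psd_tr_ge0 n (A : 'M[C]_n) : psd A -> 0 <= \tr A.
Proof. by move=> Apsd; apply: sumr_ge0 => k _; rewrite -qform_delta; apply: Apsd. Qed.

Lemma psd_tr_eq0 n (A : 'M[C]_n) : psd A -> \tr A = 0 -> A = 0.
Proof.
move=> Apsd /psumr_eq0P Adiag0; apply/matrixP => i j.
have /matrixP/(_ i 0) : A *m (delta_mx j 0 : 'cV[C]_n) = 0.
  apply: psd_qform_eq0 => //; rewrite qform_delta Adiag0 // => k _.
  by rewrite -qform_delta; apply: Apsd.
by rewrite -colE !mxE.
Qed.
End PositiveSemidefinite.

Section OrthogonalPositiveMatrices.
Variable R : rcfType.
Local Notation C := R[i].

Lemma mulmx_diag_entry m n (X : 'M[C]_(m, n)) (M : 'M[C]_n) i j :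
  is_diag_mx M -> (X *m M) i j = X i j * M j j.
Proof.
move=> /is_diag_mxP Mdiag; rewrite mxE (bigD1 j) //= big1 ?addr0 // => k kj.
by rewrite Mdiag ?mulr0.
Qed.

Lemma hadj_row m n (X : 'M[C]_(m, n)) j : hadj (row j X) = col j (hadj X).
Proof. by apply/matrixP => i k; rewrite !(hadjE, mxE). Qed.

Lemma hermitian_codiagonalization n (As : seq 'M[C]_n) :
  {in As, forall A, hadj A = A} -> {in As &, forall A B, comm_mx A B} ->
  codiagonalizable_in (@unitarymx C n n) As.
Proof.
move=> Aherm /cotrigonalization[P Pu Ptrig]; exists P => //.
apply/allP => A AAs; have := allP Ptrig A AAs; rewrite /= /similar_to !conjymx //.
have Bherm : hadj (P *m A *m hadj P) = P *m A *m hadj P.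
  by rewrite !hadj_mul hadjK Aherm // mulmxA.
move: (P *m A *m hadj P) Bherm => B Bherm Btrig.
rewrite is_diag_mxEtrig Btrig; apply/is_trig_mxP => i j ij.
by rewrite mxE -[B j i]conjCK -hadjE Bherm (is_trig_mxP Btrig) ?rmorph0.
Qed.

Lemma psd_mulmx_eq0 n (A B : 'M[C]_n) :
  psd A -> psd B -> \tr (A *m B) = 0 -> A *m B = 0.
Proof.
move=> Apsd Bpsd trAB0.
have [P Pu] : codiagonalizable_in (@unitarymx C n n) [:: B].
  apply: hermitian_codiagonalization => [A1 /[1!inE] /eqP -> | A1 A2].
    exact: psd_hermitian.
  by rewrite !inE => /eqP -> /eqP ->.
rewrite /= andbT /similar_to conjymx // => Ddiag.
set D := P *m B *m hadj P in Ddiag.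
have BE : B = hadj P *m D *m P.
  rewrite /D !mulmxA hadj_unitary_mulmx // mul1mx -mulmxA.
  by rewrite hadj_unitary_mulmx // mulmx1.
have D_ge0 j : 0 <= D j j by rewrite /D qform_row; apply: Bpsd.
clearbody D; set A' := P *m A *m hadj P.
have A'_ge0 j : 0 <= A' j j by rewrite /A' qform_row; apply: Apsd.
have trABE : \tr (A *m B) = \sum_j A' j j * D j j.
  rewrite BE !mulmxA mxtrace_mulC !mulmxA -/A'.
  by apply: eq_bigr => j _; rewrite mulmx_diag_entry.
have /psumr_eq0P A'D0 : \sum_j A' j j * D j j = 0 by rewrite -trABE.
have {}A'D0 j : A' j j * D j j = 0.
  by apply: A'D0 => // k _; exact: mulr_ge0 (A'_ge0 k) (D_ge0 k).
have AP'D0 : A *m hadj P *m D = 0.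
  apply/matrixP => i j; rewrite mulmx_diag_entry // [RHS]mxE.
  have /eqP := A'D0 j; rewrite mulf_eq0 => /orP[A'j0|/eqP->]; last first.
    by rewrite mulr0.
  have /matrixP/(_ i 0) : A *m hadj (row j P) = 0.
    by apply: psd_qform_eq0; rewrite // -qform_row (eqP A'j0).
  by rewrite hadj_row colE mulmxA -colE !mxE => ->; rewrite mul0r.
by rewrite BE !mulmxA AP'D0 mul0mx.
Qed.

Lemma sumr_le_pairwise_mul0 (I : finType) (i0 : I) (x : I -> C) (y : C) :
  (forall i j, i != j -> x i * x j = 0) -> (forall i, x i <= y) ->
  \sum_i x i <= y.
Proof.
move=> x_mul0 x_le; have [i xi_neq0|x_eq0] := pickP (fun i => x i != 0).
  rewrite (bigD1 i) //= big1 ?addr0 // => j ji.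
  by have /eqP := x_mul0 j i ji; rewrite mulf_eq0 (negPf xi_neq0) orbF => /eqP.
rewrite big1 => [|i _]; last exact/eqP/negbFE/x_eq0.
by rewrite -(eqP (negbFE (x_eq0 i0))).
Qed.

Lemma psd_orthogonal_tr_le n N (K : 'M[C]_n) (D : 'I_N -> 'M[C]_n) :
  (0 < N)%N -> (forall k, psd (D k)) -> (forall k l, k != l -> D k *m D l = 0) ->
  (forall k, psd (K - D k)) -> \sum_k \tr (D k) <= \tr K.
Proof.
move=> N_gt0 Dpsd D_orth KgeD.
have [P Pu Pdiag] :
    codiagonalizable_in (@unitarymx C n n) [seq D k | k <- enum 'I_N].
  apply: hermitian_codiagonalization => [A1 /mapP[k _ ->]|A1 A2 /mapP[k _ ->]].
    exact: psd_hermitian.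
  move=> /mapP[l _ ->]; rewrite /comm_mx; have [->//|kl] := eqVneq k l.
  by rewrite !D_orth // eq_sym.
pose B k := P *m D k *m hadj P.
have Bdiag k : is_diag_mx (B k).
  by have := allP Pdiag _ (map_f D (mem_enum _ k)); rewrite /= /similar_to conjymx.
have Bmul0 k l j : k != l -> B k j j * B l j j = 0.
  move=> kl; rewrite -mulmx_diag_entry // /B !mulmxA -(mulmxA _ (hadj P)).
  by rewrite hadj_unitary_mulmx // mulmx1 -(mulmxA P) D_orth // mulmx0 mul0mx mxE.
have BleK k j : B k j j <= (P *m K *m hadj P) j j.
  rewrite -subr_ge0 (_ : _ - _ = (P *m (K - D k) *m hadj P) j j).
    by rewrite qform_row; apply: KgeD.
  by rewrite /B mulmxBr mulmxBl !mxE.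
rewrite -(mxtrace_unitary_conj K Pu).
under eq_bigr do rewrite -(mxtrace_unitary_conj _ Pu) -/(B _).
rewrite exchange_big; apply: ler_sum => j _.
apply: (sumr_le_pairwise_mul0 (Ordinal N_gt0)) => [k l|k]; [exact: Bmul0|exact: BleK].
Qed.
End OrthogonalPositiveMatrices.

Section ChannelAdjoint.
Variable R : rcfType.
Local Notation C := R[i].

Lemma mxtens11 (X Y : 'M[C]_1) : (X *t Y) 0 0 = X 0 0 * Y 0 0.
Proof. by rewrite mxE !(ord1 (mxtens_unindex _).1) !(ord1 (mxtens_unindex _).2). Qed.

Lemma qform_tens m n (A : 'M[C]_m) (B : 'M[C]_n) (a : 'cV[C]_m) (b : 'cV[C]_n) :
  qform (A *t B) (a *t b) (a *t b) = qform A a a * qform B b b.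
Proof.
have E : (hadj (a *t b) *m (A *t B) *m (a *t b) : 'M_(1 * 1, 1 * 1))
         = (hadj a *m A *m a) *t (hadj b *m B *m b).
  by rewrite hadj_tens !tensmx_mul.
by rewrite /qform -mxtens11; exact: (congr1 (fun M : 'M_(1 * 1) => M 0 0) E).
Qed.

Lemma qform_delta_mx n (k l : 'I_n) (u : 'cV[C]_n) :
  qform (delta_mx k l) u u = (u k 0)^* * u l 0.
Proof.
rewrite /qform -(mul_delta_mx (0 : 'I_1)) mulmxA -colE -mulmxA -rowE mxE big_ord1.
by rewrite !mxE.
Qed.

Lemma qform_sum n (A : 'M[C]_n) (v : 'cV[C]_n) :
  qform A v v = \sum_k \sum_l (v k 0)^* * A k l * v l 0.
Proof.
rewrite /qform mxE exchange_big; apply: eq_bigr => l _.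
by rewrite mxE mulr_suml; apply: eq_bigr => k _; rewrite hadjE.
Qed.

Lemma hs_inner_outer n (A : 'M[C]_n) (f : 'cV[C]_n) :
  hs_inner A (f *m hadj f) = (qform A f f)^*.
Proof.
rewrite /hs_inner mulmxA mxtrace_mulC mulmxA trace_mx11 /qform.
by rewrite -hadjE !hadj_mul hadjK mulmxA.
Qed.

Lemma mxtrace_delta n (k l : 'I_n) : \tr (delta_mx k l : 'M[C]_n) = (k == l)%:R.
Proof.
rewrite /mxtrace (bigD1 k) //= big1 ?addr0; first by rewrite mxE eqxx.
by move=> i /negPf ik; rewrite mxE ik.
Qed.

Variable d : nat.

Lemma onb_sum_outer (e : 'I_d -> 'cV[C]_d) :
  orthonormal_basis e -> \sum_i e i *m hadj (e i) = 1%:M.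
Proof.
move=> e_onb; pose U : 'M[C]_d := \matrix_(p, i) e i p 0.
have /mulmx1C UUh : hadj U *m U = 1%:M.
  apply/matrixP => i j; rewrite [RHS]mxE -e_onb !mxE.
  by apply: eq_bigr => p _; rewrite !mxE.
apply/matrixP => p q; rewrite -UUh summxE !mxE; apply: eq_bigr => i _.
by rewrite !mxE big_ord1 !mxE.
Qed.

Lemma hs_adjoint_outer_psd (Phi : 'M[C]_d -> 'M[C]_d) (f : 'cV[C]_d) :
  quantum_channel Phi -> psd (hs_adjoint Phi (f *m hadj f)).
Proof.
case=> _ choi_psd _ v; pose a : 'cV[C]_d := map_mx conjC v.
have := choi_psd (a *t f); rewrite -/(qform _ _ _) -conjC_ge0.
suff -> : qform (choi Phi) (a *t f) (a *t f) =
          (qform (hs_adjoint Phi (f *m hadj f)) v v)^* by rewrite conjCK.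
rewrite [in RHS]qform_sum rmorph_sum /qform /choi mulmx_sumr mulmx_suml summxE.
apply: eq_bigr => k _; rewrite mulmx_sumr mulmx_suml summxE rmorph_sum.
apply: eq_bigr => l _.
rewrite -/(qform _ _ _) qform_tens qform_delta_mx /hs_adjoint mxE hs_inner_outer.
by rewrite !mxE !rmorphM /= !conjCK; ring.
Qed.

Lemma hs_adjoint_onb_sum (Phi : 'M[C]_d -> 'M[C]_d) (e : 'I_d -> 'cV[C]_d) :
  quantum_channel Phi -> orthonormal_basis e ->
  \sum_i hs_adjoint Phi (e i *m hadj (e i)) = 1%:M.
Proof.
case=> _ _ Phi_tr e_onb; apply/matrixP => k l; rewrite summxE.
under eq_bigr do rewrite mxE.
rewrite /hs_inner -raddf_sum -mulmx_sumr onb_sum_outer // mulmx1 /= mxtrace_hadj.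
by rewrite Phi_tr mxtrace_delta rmorph_nat mxE.
Qed.
End ChannelAdjoint.

Section Vectorization.
Variable R : rcfType.
Local Notation C := R[i].
Variable d : nat.

Lemma vketE (X : 'M[C]_d) i j : vket X (mxtens_index (i, j)) 0 = X i j.
Proof.
have ord1_eq0 (x : 'I_1) : x == 0 by rewrite ord1.
have sum_delta (F : 'I_d -> C) k : \sum_a F a * (k == a)%:R = F k.
  rewrite (bigD1 k) //= eqxx mulr1 big1 ?addr0 // => a /negPf.
  by rewrite eq_sym => ->; rewrite mulr0.
rewrite /vket summxE (eq_bigr (fun a => X a j * (i == a)%:R)) ?sum_delta //.
move=> a _; rewrite summxE.
rewrite (eq_bigr (fun b => X a b * (i == a)%:R * (j == b)%:R)) ?sum_delta //.
move=> b _.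
by rewrite !mxE mxtens_indexK /= !ord1_eq0 !andbT mulrA.
Qed.

Lemma vketB : {morph @vket R d : X Y / X - Y}.
Proof.
move=> X Y; apply/matrixP => p q; rewrite (ord1 q).
by case: (mxtens_indexP p) => i j; rewrite vketE !mxE !vketE.
Qed.

HB.instance Definition _ := GRing.isZmodMorphism.Build _ _ (@vket R d) vketB.

Lemma vket1E : vket (1%:M : 'M[C]_d) = \sum_i (ketb R i *t ketb R i).
Proof.
apply: eq_bigr => i _; rewrite (bigD1 i) //= big1 ?addr0.
  by rewrite mxE eqxx scale1r.
by move=> j /negPf ij; rewrite mxE eq_sym ij scale0r.
Qed.

Lemma omegaE : omega R d = (d%:R)^-1 *: vproj (1%:M : 'M[C]_d).
Proof.
rewrite /omega /vproj vket1E [hadj _]raddf_sum mulmx_suml; congr (_ *: _).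
by apply: eq_bigr => i _; rewrite mulmx_sumr.
Qed.

Lemma sum_mxtens_index (F : 'I_(d * d) -> C) :
  \sum_p F p = \sum_i \sum_j F (mxtens_index (i, j)).
Proof.
rewrite pair_bigA /= (reindex (@mxtens_index d d)) /=; first by apply: eq_bigr; case.
by exists (@mxtens_unindex d d) => p _; rewrite ?mxtens_indexK ?mxtens_unindexK.
Qed.

Lemma hadj_vket_mulmx (X Y : 'M[C]_d) :
  (hadj (vket X) *m vket Y) 0 0 = hs_inner X Y.
Proof.
rewrite mxE sum_mxtens_index exchange_big; apply: eq_bigr => j _.
by rewrite mxE; apply: eq_bigr => i _; rewrite hadjE !vketE hadjE.
Qed.

Lemma mxtrace_omega : (0 < d)%N -> \tr (omega R d) = 1.
Proof.
move=> d_gt0; rewrite omegaE mxtraceZ /vproj mxtrace_mulC trace_mx11 hadj_vket_mulmx.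
by rewrite /hs_inner hadj1 mulmx1 mxtrace1 mulVf // pnatr_eq0 -lt0n.
Qed.

Lemma omega_hermitian : hadj (omega R d) = omega R d.
Proof.
by rewrite omegaE /vproj hadjZ hadj_mul hadjK geC0_conj // invr_ge0 ler0n.
Qed.
End Vectorization.

Section GmatOmega.
Variable R : rcfType.
Local Notation C := R[i].
Variable d : nat.
Variable Phi : 'M[C]_d -> 'M[C]_d.
Variable e : 'I_d -> 'cV[C]_d.
Hypothesis Phi_channel : quantum_channel Phi.
Hypothesis e_onb : orthonormal_basis e.

Let X i := hs_adjoint Phi (e i *m hadj (e i)).
Let t i := \tr (X i).

Let t_ge0 i : 0 <= t i.
Proof. exact/psd_tr_ge0/hs_adjoint_outer_psd. Qed.

Lemma sum_hs_adjoint_tr : \sum_(i | t i != 0) t i = d%:R.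
Proof.
rewrite big_mkcond /= -[RHS](mxtrace1 C d) -(hs_adjoint_onb_sum Phi_channel e_onb).
by rewrite raddf_sum; apply: eq_bigr => i _; case: eqP.
Qed.

Lemma sum_vket_hs_adjoint : \sum_(i | t i != 0) vket (X i) = vket (1%:M : 'M[C]_d).
Proof.
rewrite big_mkcond /= -(hs_adjoint_onb_sum Phi_channel e_onb) raddf_sum.
apply: eq_bigr => i _; case: eqP => // ti0.
by rewrite (psd_tr_eq0 (hs_adjoint_outer_psd _ Phi_channel) ti0) raddf0.
Qed.

(* With [u_i = |X_i>/t_i - |1>/d], the cross terms telescope because
   [sum_i |X_i> = |1>] and [sum_i t_i = d]. *)
Lemma Gmat_sub_omegaE : (0 < d)%N ->
  let u i := (t i)^-1 *: vket (X i) - (d%:R)^-1 *: vket (1%:M : 'M[C]_d) in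
  Gmat Phi e - omega R d = \sum_(i | t i != 0) t i *: (u i *m hadj (u i)).
Proof.
move=> d_gt0 u; rewrite {}/u; set c : C := (d%:R)^-1; set w := vket (1%:M : 'M[C]_d).
have cd : c * d%:R = 1 by rewrite mulVf // pnatr_eq0 -lt0n.
have c_real : c^* = c by rewrite geC0_conj // invr_ge0 ler0n.
have expand i : t i != 0 ->
    let u := (t i)^-1 *: vket (X i) - c *: w in
    t i *: (u *m hadj u) =
      (t i)^-1 *: vproj (X i) - c *: (vket (X i) *m hadj w)
      - c *: (w *m hadj (vket (X i))) + (c * c * t i) *: (w *m hadj w).
  move=> ti_neq0 u; rewrite /u hadjB !hadjZ c_real fmorphV /=.
  rewrite (geC0_conj (t_ge0 i)) /vproj.
  by apply/matrixP => p q; rewrite !(mxE, big_ord1); field.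
rewrite (eq_bigr _ expand) !big_split /= !sumrN -!scaler_sumr -mulmx_suml.
rewrite sum_vket_hs_adjoint -mulmx_sumr -raddf_sum sum_vket_hs_adjoint.
rewrite -scaler_suml -mulr_sumr.
by rewrite sum_hs_adjoint_tr -mulrA cd mulr1 omegaE subrK.
Qed.

Lemma Gmat_sub_omega_psd : (0 < d)%N -> psd (Gmat Phi e - omega R d).
Proof.
by move=> d_gt0; rewrite Gmat_sub_omegaE //; apply: psd_sum => i _; apply: psd_outer.
Qed.
End GmatOmega.

Theorem proposition4p9 (R : rcfType) (d N : nat) (d_gt0 : (0 < d)%N)
  (N_gt0 : (0 < N)%N)
  (Phi : 'I_N -> 'M[R[i]]_d -> 'M[R[i]]_d) (e : 'I_N -> 'I_d -> 'cV[R[i]]_d) :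
  (forall k, quantum_channel (Phi k)) ->
  (forall k, orthonormal_basis (e k)) ->
  (forall k l : 'I_N, k != l ->
     hs_inner (Gmat (Phi k) (e k) - omega R d)
              (Gmat (Phi l) (e l) - omega R d) = 0) ->
  (exists H : 'M[R[i]]_(d * d),
      [/\ is_hermitian H, (forall k, loewner_ge H (Gmat (Phi k) (e k)))
        & \tr H = 1 - N%:R + \sum_(k < N) \tr (Gmat (Phi k) (e k))])
  /\ (forall H : 'M[R[i]]_(d * d), is_hermitian H ->
        (forall k, loewner_ge H (Gmat (Phi k) (e k))) ->
        1 - N%:R + \sum_(k < N) \tr (Gmat (Phi k) (e k)) <= \tr H).
Proof.
move=> Phi_channel e_onb G_orth.
set G := fun k => Gmat (Phi k) (e k); set Om := omega R d; pose D k := G k - Om.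
have D_psd k : psd (D k) := Gmat_sub_omega_psd (Phi_channel k) (e_onb k) d_gt0.
have D_orth k l : k != l -> D k *m D l = 0.
  move=> kl; apply: psd_mulmx_eq0 => //.
  by rewrite -(psd_hermitian (D_psd k)); apply: G_orth.
have GE k : G k = Om + D k by rewrite addrC subrK.
have Om_herm : hadj Om = Om by apply: omega_hermitian.
have trOm : \tr Om = 1 by apply: mxtrace_omega.
have trE : \tr Om + \sum_k \tr (D k) = 1 - N%:R + \sum_k \tr (G k).
  rewrite trOm; under eq_bigr do rewrite raddfB /= trOm.
  by rewrite sumrB sumr_const card_ord addrA addrAC.
split.
  exists (Om + \sum_k D k); split.
  - rewrite /is_hermitian raddfD raddf_sum /= Om_herm.
    by under eq_bigr do rewrite psd_hermitian //.
  - move=> k; rewrite /loewner_ge -/(G k) GE (bigD1 k) //= addrA.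
    by rewrite (addrC (Om + D k)) addrK; apply: psd_sum.
  - by rewrite raddfD raddf_sum trE.
move=> H _ H_ge_G; rewrite -trE -lerBrDl -raddfB.
apply: psd_orthogonal_tr_le => // k.
by rewrite -addrA -opprD -GE; apply: H_ge_G.
Qed.
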